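(* Let $J$ be an abelian topological semigroup with identity $0$ and $X$ a topological vector space over $\mathbf{C}$. If $\phi\in P^n(J,X)$ and there is $k$ with $0\le k<n$ such that $\phi(ms)=m^k\phi(s)$ for all $m\in\mathbf{Z}_+$ and $s\in J$, then $\phi\in P^k(J,X)$.
   Context: $\mathbf{Z}_+=\{0,1,2,\dots\}$. A continuous $p:J\to X$ is a polynomial of degree at most $n$ if for all $s,t\in J$ the map $m\mapsto p(s+mt)$, $m\in\mathbf{Z}_+$, is a polynomial in $m$ of degree at most $n$ with coefficients in $X$; $P^n(J,X)$ is the space of such polynomials. *)

From HB Require Import structures.
From mathcomp Require Import all_boot all_order all_algebra.
From mathcomp Require Import complex.
From mathcomp Require Import all_classical all_reals all_analysis.
Set Implicit Arguments. Unset Strict Implicit. Unset Printing Implicit Defensive.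
Import Order.TTheory GRing.Theory Num.Theory.
Import numFieldTopology.Exports.
Local Open Scope ring_scope.
Local Open Scope complex_scope.

(* J : an abelian topological semigroup with identity 0, i.e. a commutative
   additive monoid (nmodType) with a topology for which addition is
   continuous: this is exactly MathComp-Analysis' TopologicalNmodule. *)

Definition is_poly_deg (R : realType) (J : TopologicalNmodule.type)
  (X : topologicalLmodType R[i]) (n : nat) (p : J -> X) : Prop :=
  continuous p /\
  forall s t : J, exists c : 'I_n.+1 -> X,
    forall m : nat, p (s + t *+ m) = \sum_(j < n.+1) ((m%:R : R[i]) ^+ j) *: c j.

From HB Require Import structures.
From mathcomp Require Import all_boot all_order all_algebra.
From mathcomp Require Import complex.
From mathcomp Require Import all_classical all_reals all_analysis.

(* Writing phi (s + t *+ m) = sum_j m^j c_j(s, t), homogeneity applied to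
   phi (a (s + i t)) gives a^j c_j(a s, t) = a^k c_j(s, t). Reading
   phi (s *+ a + t *+ i) with base t *+ i and step s shows that a |-> c_j(a s, t)
   is itself polynomial in a (the coefficients are recovered from the values at
   i = 0, ..., n by inverting a Vandermonde matrix). So a^j times a polynomial
   in a equals a^k c_j(s, t), which forces c_j(s, t) = 0 when j > k. *)

Set Implicit Arguments. Unset Strict Implicit. Unset Printing Implicit Defensive.
Import GRing.Theory Num.Theory.
Local Open Scope ring_scope.
Local Open Scope complex_scope.

Definition hornerv (F : pzRingType) (X : lmodType F) (N : nat) (c : nat -> X)
    (x : F) : X :=
  \sum_(j < N) x ^+ j *: c j.

Section HornervAlgebra.
Variables (F : comPzRingType) (X : lmodType F).
Implicit Types (c d : nat -> X) (x a : F) (N : nat).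

Lemma hornervB N c d x :
  hornerv N (fun j => c j - d j) x = hornerv N c x - hornerv N d x.
Proof. by rewrite /hornerv -sumrB; apply: eq_bigr => j _; rewrite scalerBr. Qed.

Lemma hornervZ N a c x : hornerv N (fun j => a *: c j) x = a *: hornerv N c x.
Proof.
by rewrite /hornerv scaler_sumr; apply: eq_bigr => j _; rewrite !scalerA mulrC.
Qed.

Lemma hornerv_sum (I : finType) N (b : I -> F) (c : I -> nat -> X) x :
  \sum_i b i *: hornerv N (c i) x = hornerv N (fun j => \sum_i b i *: c i j) x.
Proof.
rewrite /hornerv; under eq_bigr => i _ do rewrite scaler_sumr.
rewrite exchange_big; apply: eq_bigr => j _; rewrite scaler_sumr.
by apply: eq_bigr => i _; rewrite !scalerA mulrC.
Qed.

Lemma hornerv_dilate N a c x :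
  hornerv N (fun j => a ^+ j *: c j) x = hornerv N c (x * a).
Proof. by apply: eq_bigr => j _; rewrite scalerA exprMn. Qed.

Lemma hornerv_shift N l c x :
  hornerv (l + N) (fun j => if (l <= j)%N then c (j - l)%N else 0) x
  = x ^+ l *: hornerv N c x.
Proof.
rewrite /hornerv -(big_mkord xpredT
  (fun j => x ^+ j *: (if (l <= j)%N then c (j - l)%N else 0))).
rewrite (big_cat_nat (leq0n l) (leq_addr _ _)) /= big_nat_cond big1 => [|j].
  rewrite add0r (big_addn 0 _ l) addKn big_mkord scaler_sumr.
  by apply: eq_bigr => j _; rewrite leq_addl addnK scalerA -exprD addnC.
by rewrite andbT => /andP[_]; rewrite ltnNge => /negbTE->; rewrite scaler0.
Qed.

Lemma hornerv_delta N k (v : X) x : (k < N)%N ->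
  hornerv N (fun j => if j == k then v else 0) x = x ^+ k *: v.
Proof.
move=> kN; rewrite /hornerv (bigD1 (Ordinal kN)) //= eqxx big1 ?addr0 // => j.
by rewrite -val_eqE /= => /negbTE->; rewrite scaler0.
Qed.

Lemma hornerv_trunc M N c x : (M <= N)%N ->
  (forall j, (M <= j < N)%N -> c j = 0) -> hornerv N c x = hornerv M c x.
Proof.
move=> MN c0; rewrite /hornerv (big_ord_widen N (fun j => x ^+ j *: c j) MN).
rewrite [LHS](bigID (fun j : 'I_N => (j < M)%N)) /= [X in _ + X]big1 ?addr0 // => j.
by rewrite -leqNgt => Mj; rewrite c0 ?scaler0 // Mj ltn_ord.
Qed.

End HornervAlgebra.

Section HornervAtNaturals.
Variables (F : numFieldType) (X : lmodType F).
Implicit Types (c : nat -> X) (N : nat).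

(* The Vandermonde matrix at the nodes 0, ..., N-1 is invertible in
   characteristic 0; its inverse recovers the coefficients from the values. *)
Lemma hornerv_coef_combination N : exists L : 'M[F]_N,
  forall c (j : 'I_N), c j = \sum_(i < N) L i j *: hornerv N c i%:R.
Proof.
pose V := Vandermonde N (\row_(i < N) (i%:R : F)).
have V_unit : V \in unitmx.
  rewrite unitmxE det_Vandermonde unitfE; apply/prodf_neq0 => i _.
  apply/prodf_neq0 => q iq; rewrite !mxE subr_eq0 eqr_nat.
  by rewrite eq_sym neq_ltn iq.
exists (invmx V) => c j; rewrite /hornerv.
under eq_bigr => i _ do rewrite scaler_sumr.
rewrite exchange_big /=.
under eq_bigr => q _.
  under eq_bigr => i _ do rewrite scalerA.
  rewrite -scaler_suml.
  have -> : \sum_i invmx V i j * (i%:R : F) ^+ q = (V *m invmx V) q j.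
    by rewrite mxE; apply: eq_bigr => i _; rewrite !mxE mulrC.
  rewrite mulmxV // mxE.
  over.
rewrite (bigD1 j) //= eqxx scale1r big1 ?addr0 // => q /negbTE qj.
by rewrite qj scale0r.
Qed.

Lemma hornerv_nat_eq0 N c : (forall i : 'I_N, hornerv N c i%:R = 0) ->
  forall j, (j < N)%N -> c j = 0.
Proof.
move=> c0 j jN; have [L cE] := hornerv_coef_combination N.
by rewrite (cE c (Ordinal jN)) big1 // => i _; rewrite c0 scaler0.
Qed.

Lemma hornerv_nat_inj N c d :
  (forall i : 'I_N, hornerv N c i%:R = hornerv N d i%:R) ->
  forall j, (j < N)%N -> c j = d j.
Proof.
move=> cd j jN; apply/eqP; rewrite -subr_eq0; apply/eqP.
by apply: (hornerv_nat_eq0 (c := fun q => c q - d q) _ jN) => i;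
  rewrite hornervB cd subrr.
Qed.

(* Compare the coefficients of x^k in x^l E(x) - x^k v. *)
Lemma shifted_hornerv_low_coef_eq0 N k l (E : nat -> X) (v : X) : (k < l)%N ->
  (forall a : nat, a%:R ^+ l *: hornerv N E a%:R = a%:R ^+ k *: v) -> v = 0.
Proof.
move=> kl Ev; have kN : (k < l + N)%N := leq_trans kl (leq_addr N l).
pose W j := (if (l <= j)%N then E (j - l)%N else 0) - (if j == k then v else 0).
have W0 : forall i : 'I_(l + N), hornerv (l + N) W i%:R = 0.
  by move=> i; rewrite hornervB hornerv_shift hornerv_delta // Ev subrr.
have := hornerv_nat_eq0 W0 kN.
by rewrite /W eqxx leqNgt kl sub0r => /eqP; rewrite oppr_eq0 => /eqP.
Qed.

End HornervAtNaturals.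

Section HomogeneousPolynomialMap.
Variables (F : numFieldType) (X : lmodType F) (J : nmodType).
Variables (phi : J -> X) (N k : nat) (cf : J -> J -> nat -> X).
Hypothesis phi_poly : forall s t (m : nat),
  phi (s + t *+ m) = hornerv N (cf s t) m%:R.
Hypothesis phi_homog : forall (m : nat) s, phi (s *+ m) = m%:R ^+ k *: phi s.

Lemma coef_along_multiples_poly s t (l : 'I_N) :
  exists E : nat -> X, forall a : nat, cf (s *+ a) t l = hornerv N E a%:R.
Proof.
have [L cE] := hornerv_coef_combination X N.
exists (fun p => \sum_i L i l *: cf (t *+ i) s p) => a.
rewrite cE -hornerv_sum; apply: eq_bigr => i _.
by rewrite -phi_poly addrC phi_poly.
Qed.

Lemma coef_scale s t (a l : nat) : (l < N)%N ->
  a%:R ^+ l *: cf (s *+ a) t l = a%:R ^+ k *: cf s t l.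
Proof.
apply: (@hornerv_nat_inj _ _ N (fun q => a%:R ^+ q *: cf (s *+ a) t q)
  (fun q => a%:R ^+ k *: cf s t q)) => i.
rewrite hornerv_dilate hornervZ -natrM -!phi_poly -phi_homog.
by rewrite mulrnDl -mulrnA.
Qed.

Lemma coef_high_eq0 s t (l : nat) : (k < l < N)%N -> cf s t l = 0.
Proof.
move=> /andP[kl lN]; have [E cE] := coef_along_multiples_poly s t (Ordinal lN).
by apply: (shifted_hornerv_low_coef_eq0 (N := N) (E := E) kl) => a;
  rewrite -cE coef_scale.
Qed.

End HomogeneousPolynomialMap.

Lemma is_poly_degE (R : realType) (J : TopologicalNmodule.type)
    (X : topologicalLmodType R[i]) (n : nat) (phi : J -> X) :
  is_poly_deg n phi <-> continuous phi /\
    exists cf : J -> J -> nat -> X,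
      forall s t (m : nat), phi (s + t *+ m) = hornerv n.+1 (cf s t) m%:R.
Proof.
split=> [[phi_cont phi_poly] | [phi_cont [cf phi_poly]]]; split=> //.
  pose c s := projT1 (choice (phi_poly s)).
  exists (fun s t j => c s t (inord j)) => s t m.
  rewrite (projT2 (choice (phi_poly s))).
  by apply: eq_bigr => j _; rewrite inord_val.
by move=> s t; exists (fun j => cf s t j).
Qed.

Theorem lemma2p2 (R : realType) (J : TopologicalNmodule.type)
  (X : topologicalLmodType R[i]) (n k : nat) (phi : J -> X) :
  is_poly_deg n phi ->
  (k < n)%N ->
  (forall (m : nat) (s : J), phi (s *+ m) = ((m%:R : R[i]) ^+ k) *: phi s) ->
  is_poly_deg k phi.
Proof.
move=> /is_poly_degE[phi_cont [cf phi_poly]] kn phi_homog.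
apply/is_poly_degE; split=> //; exists cf => s t m.
rewrite phi_poly (hornerv_trunc _ (leqW kn)) => // j.
exact: coef_high_eq0 phi_poly phi_homog s t j.
Qed.
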